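(* For every pair of positive integers $\ell,k$ with $1\leq \ell<k$, $$\sum_{r=1}^k r!\,{k\brace r}=\sum_{p=1}^{\ell}\sum_{q=1}^{k-\ell}{\ell\brace p}{k-\ell\brace q}\,p!\,q!\,D(p,q).$$
   Context: ${k\brace r}$ denotes the Stirling number of the second kind (number of partitions of a $k$-element set into $r$ nonempty blocks). $D(m,n)$ is the Delannoy number, defined for nonnegative integers $m,n$ by $D(m,n)=1$ if $mn=0$, and $D(m,n)=D(m-1,n)+D(m-1,n-1)+D(m,n-1)$ if $mn\neq0$. *)

From mathcomp Require Import all_boot.
Set Implicit Arguments. Unset Strict Implicit. Unset Printing Implicit Defensive.

Fixpoint stirling2 (k r : nat) : nat :=
  match k, r with
  | 0, 0 => 1
  | 0, _.+1 => 0
  | _.+1, 0 => 0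
  | k'.+1, r'.+1 => r'.+1 * stirling2 k' r'.+1 + stirling2 k' r'
  end.

(* Delannoy numbers: D(m,n)=1 if mn=0, else D(m-1,n)+D(m-1,n-1)+D(m,n-1). *)
Fixpoint delannoy (m n : nat) : nat :=
  match m with
  | 0 => 1
  | m'.+1 =>
    let fix aux (n : nat) : nat :=
      match n with
      | 0 => 1
      | n'.+1 => delannoy m' n'.+1 + delannoy m' n' + aux n'
      end
    in aux n
  end.

Lemma delannoy_check : [:: delannoy 2 2; delannoy 3 2; delannoy 3 3; delannoy 1 5] = [:: 13; 25; 63; 11].
Proof. by []. Qed.
Lemma stirling_check : [:: stirling2 4 2; stirling2 5 3; stirling2 3 3] = [:: 7; 25; 1].
Proof. by []. Qed.

From mathcomp Require Import all_boot zify.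

(* Write s(n, r) := r! {n brace r}, the number of surjections from an n-set
   onto an r-set, and consider the bilinear pairing
     R(a, b) := sum_(p <= a) sum_(q <= b) s(a, p) s(b, q) D(p, q).
   The recurrence s(n+1, r+1) = (r+1) (s(n, r+1) + s(n, r)) moves one unit of
   b into the operator g |-> (q g(q) + (q+1) g(q+1)) acting on q |-> D(p, q),
   and the Delannoy identity
     (q+1) D(p, q+1) + q D(p, q) = (p+1) D(p+1, q) + p D(p, q)
   says that this operator acts on D in q exactly as it does in p.  Hence
   R(a, b+1) = R(a+1, b), so R(l, k-l) = R(0, k) = sum_r s(k, r). *)

Lemma sum_nat_drop0 n (F : nat -> nat) :
  F 0 = 0 -> \sum_(1 <= i < n) F i = \sum_(0 <= i < n) F i.
Proof.
by case: n => [|n] F0; [rewrite !big_geq | rewrite [RHS]big_ltn // F0 add0n].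
Qed.

Lemma delannoySS m n :
  delannoy m.+1 n.+1 = delannoy m n.+1 + delannoy m n + delannoy m.+1 n.
Proof. by []. Qed.

Lemma delannoy0n n : delannoy 0 n = 1.
Proof. by []. Qed.

Lemma delannoyn0 m : delannoy m 0 = 1.
Proof. by case: m. Qed.

Lemma delannoy1n n : delannoy 1 n = n.*2.+1.
Proof. by elim: n => [|n IHn] //; rewrite delannoySS IHn !delannoy0n; lia. Qed.

Lemma delannoyn1 m : delannoy m 1 = m.*2.+1.
Proof. by elim: m => [|m IHm] //; rewrite delannoySS IHm !delannoyn0; lia. Qed.

Lemma delannoy_shiftC p q :
  q.+1 * delannoy p q.+1 + q * delannoy p q =
  p.+1 * delannoy p.+1 q + p * delannoy p q.
Proof.
elim: p q => [|p IHp] q; first by rewrite !delannoy0n delannoy1n; lia.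
elim: q => [|q IHq]; first by rewrite !delannoyn0 delannoyn1; lia.
have := IHp q; have := IHp q.+1.
by rewrite !delannoySS in IHq *; lia.
Qed.

Lemma stirling2_eq0 n r : n < r -> stirling2 n r = 0.
Proof. by elim: n r => [|n IHn] [|r] //= ltnr; rewrite !IHn ?muln0 //; lia. Qed.

Lemma stirling2n0 n : 0 < n -> stirling2 n 0 = 0.
Proof. by case: n. Qed.

Definition nsurj n r := r`! * stirling2 n r.

Lemma nsurjS0 n : nsurj n.+1 0 = 0.
Proof. by rewrite /nsurj muln0. Qed.

Lemma nsurj_eq0 n r : n < r -> nsurj n r = 0.
Proof. by move=> ltnr; rewrite /nsurj stirling2_eq0 ?muln0. Qed.

Lemma nsurjSS n r : nsurj n.+1 r.+1 = r.+1 * (nsurj n r.+1 + nsurj n r).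
Proof. by rewrite /nsurj /= factS; lia. Qed.

Lemma sum_nsurjS n (g : nat -> nat) :
  \sum_(0 <= r < n.+2) nsurj n.+1 r * g r =
  \sum_(0 <= r < n.+1) nsurj n r * (r * g r + r.+1 * g r.+1).
Proof.
have sum_shift : \sum_(0 <= r < n.+1) r.+1 * nsurj n r.+1 * g r.+1 =
                 \sum_(0 <= r < n.+1) nsurj n r * (r * g r).
  rewrite big_nat_recr //= nsurj_eq0 // muln0 mul0n addn0.
  rewrite [RHS]big_nat_recl // mul0n muln0 add0n.
  by apply: eq_bigr => r _; lia.
rewrite big_nat_recl // nsurjS0 mul0n add0n.
under eq_bigr do rewrite nsurjSS mulnDr mulnDl.
under [RHS]eq_bigr do rewrite mulnDr.
rewrite !big_split /= sum_shift; congr (_ + _).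
by apply: eq_bigr => r _; lia.
Qed.

Definition fubini n := \sum_(0 <= r < n.+1) nsurj n r.

Definition surj_delannoy a b :=
  \sum_(0 <= p < a.+1) \sum_(0 <= q < b.+1) nsurj a p * nsurj b q * delannoy p q.

Lemma surj_delannoy0n n : surj_delannoy 0 n = fubini n.
Proof.
rewrite /surj_delannoy big_nat1 /fubini.
by apply: eq_bigr => q _; rewrite delannoy0n muln1 -[nsurj 0 0]/1 mul1n.
Qed.

Lemma surj_delannoynS a b : surj_delannoy a b.+1 = surj_delannoy a.+1 b.
Proof.
rewrite /surj_delannoy.
transitivity (\sum_(0 <= p < a.+1) \sum_(0 <= q < b.+1)
  nsurj a p * nsurj b q * (p * delannoy p q + p.+1 * delannoy p.+1 q)).
  apply: eq_bigr => p _.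
  under eq_bigr do rewrite -mulnA.
  rewrite -big_distrr /= sum_nsurjS big_distrr /=.
  by apply: eq_bigr => q _; rewrite addnC delannoy_shiftC addnC mulnA.
rewrite exchange_big_nat [RHS]exchange_big_nat; apply: eq_bigr => q _.
under [RHS]eq_bigr do rewrite mulnAC.
rewrite -big_distrl /= sum_nsurjS big_distrl /=.
by apply: eq_bigr => p _; rewrite mulnAC.
Qed.

Lemma surj_delannoyE a b : surj_delannoy a b = fubini (a + b).
Proof.
elim: a b => [|a IHa] b; first exact: surj_delannoy0n.
by rewrite -surj_delannoynS IHa addnS.
Qed.

Theorem theorem2 (l k : nat) (hl : 1 <= l) (hlk : l < k) :
  \sum_(1 <= r < k.+1) r`! * stirling2 k r =
  \sum_(1 <= p < l.+1) \sum_(1 <= q < (k - l).+1)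
     stirling2 l p * stirling2 (k - l) q * p`! * q`! * delannoy p q.
Proof.
have kl_gt0 : 0 < k - l by rewrite subn_gt0.
transitivity (fubini k).
  by rewrite sum_nat_drop0 // stirling2n0 ?muln0 //; apply: leq_trans hlk.
rewrite -{1}(subnKC (ltnW hlk)) -surj_delannoyE.
rewrite sum_nat_drop0; last by apply: big1 => q _; rewrite stirling2n0.
apply: eq_bigr => p _.
rewrite sum_nat_drop0; last by rewrite stirling2n0 // muln0 !mul0n.
by apply: eq_bigr => q _; rewrite /nsurj; lia.
Qed.
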